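(* In the single-item all-pay auction with budgets described in the context, let $L=\min\{B_1,B_2,v_1,v_2\}$. In a Nash equilibrium $(F_1,F_2)$, if for some $i\in\{1,2\}$ we have $\underline{x}_i<\overline{x}_i$ and $\underline{x}_{-i}=\overline{x}_{-i}$, then $Supp(F_i)=\{0,L\}$ and $F_i(0)\le 1-\frac{2L}{v_{-i}}$. Moreover, player $i$'s expected utility is $0$ and player $-i$'s expected utility is at most $v_{-i}-2L$.
   Context: Single-item all-pay auction with budgets. There are two players $i\in\{1,2\}$; $-i$ denotes the opponent of $i$. Player $i$ has budget $B_i\ge 0$ and valuation $v_i>0$ for a single item. A pure strategy of player $i$ is a bid $x_i\in[0,B_i]$; a mixed strategy is a probability distribution on $[0,B_i]$, described by its cumulative distribution function $F_i$. The player with the higher bid wins the item. Tie-breaking: if $x_1=x_2=\min\{B_1,B_2,v_1,v_2\}$ and $\min\{B_i,v_i\}>\min\{B_{-i},v_{-i}\}$ for some $i$, then player $i$ wins; in all other ties each player wins with probability $\frac12$. Player $i$'s utility is $v_i-x_i$ if he wins and $-x_i$ if he loses. A Nash equilibrium is a pair $(F_1,F_2)$ such that each $F_i$ maximizes player $i$'s expected utility against $F_{-i}$ over all mixed strategies on $[0,B_i]$. $Supp(F_i)$ is the support of $F_i$, $\overline{x}_i=\sup Supp(F_i)$ and $\underline{x}_i=\inf Supp(F_i)$. *)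

From HB Require Import structures.
From mathcomp Require Import all_boot all_order all_algebra.
From mathcomp Require Import all_classical all_reals all_analysis.
Set Implicit Arguments. Unset Strict Implicit. Unset Printing Implicit Defensive.
Import Order.TTheory GRing.Theory Num.Theory.
Local Open Scope classical_set_scope.
Local Open Scope ring_scope.

(* Players are indexed by [bool]; the opponent of [i] is [~~ i]. *)

(* Probability that player [i] wins the item when bidding [x] against the
   opponent's bid [y], with the tie-breaking rule of the paper:
   at a tie x = y = L := min{B1,B2,v1,v2}, the player with the strictly larger
   min{B,v} wins; every other tie is broken uniformly at random. *)
Definition Lval {R : realType} (B v : bool -> R) : R :=
  Num.min (Num.min (B true) (B false)) (Num.min (v true) (v false)).

Definition win_prob {R : realType} (B v : bool -> R) (i : bool) (x y : R) : R :=
  if y < x then 1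
  else if x < y then 0
  else if (x == Lval B v) && (Num.min (B (~~ i)) (v (~~ i)) < Num.min (B i) (v i))
  then 1
  else if (x == Lval B v) && (Num.min (B i) (v i) < Num.min (B (~~ i)) (v (~~ i)))
  then 0
  else 2^-1.

Definition utility {R : realType} (B v : bool -> R) (i : bool) (x y : R) : R :=
  v i * win_prob B v i x y - x.

Definition is_strategy {R : realType} (B : bool -> R) (i : bool)
  (mu : probability R R) : Prop :=
  mu [set` `[0, B i]] = 1%E.

Definition exp_utility {R : realType} (B v : bool -> R) (i : bool)
  (mi mo : probability R R) : \bar R :=
  (\int[mi]_x \int[mo]_y (utility B v i x y)%:E)%E.

Definition nash_eq {R : realType} (B v : bool -> R)
  (mu : bool -> probability R R) : Prop :=
  (forall i, is_strategy B i (mu i)) /\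
  (forall i (nu : probability R R), is_strategy B i nu ->
     (exp_utility B v i nu (mu (~~ i)) <= exp_utility B v i (mu i) (mu (~~ i)))%E).

Definition msupp {R : realType} (mu : probability R R) : set R :=
  [set x : R | forall e : R, 0 < e -> (0 < mu [set` `](x - e)%R, (x + e)%R[])%E].

Definition bid_cdf {R : realType} (mu : probability R R) (t : R) : \bar R :=
  mu [set` `]-oo, t]].

(* The opponent -i bids a single value c almost surely: his support is a
   singleton, and the complement of a support is null. Against a sure bid c,
   a bid below c only costs money and a bid above c wins, so every bid other
   than 0 and c is strictly beaten by a nearby one; as the support of player
   i is not a singleton, he puts masses p, q > 0 on 0 and on c, both with the
   equilibrium payoff, which is therefore that of bidding 0, namely 0. Hence
   v_i times i's tie share at c equals c > 0. Undercutting c slightly would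
   save -i the payment while still beating the atom at 0, so c is at most q
   times v_{-i} times -i's tie share. Both tie shares are thus nonzero, i.e.
   the tie is split evenly: c = v_i / 2 and c <= q v_{-i} / 2. Finally a bid
   between c and min(B_i, v_i) would give i a positive payoff, so c = B_i,
   whence c = L, F_i(0) = p = 1 - q <= 1 - 2L/v_{-i}, and -i earns
   p (v_{-i} - c) + q (v_{-i}/2 - c) <= v_{-i} - 2L. *)

From HB Require Import structures.
From mathcomp Require Import all_boot all_order all_algebra.
From mathcomp Require Import all_classical all_reals all_analysis.
From mathcomp Require Import ring lra measurable_realfun.
Import Order.TTheory GRing.Theory Num.Theory numFieldNormedType.Exports.
Set Implicit Arguments. Unset Strict Implicit. Unset Printing Implicit Defensive.
Local Open Scope classical_set_scope.
Local Open Scope ring_scope.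

Section probability_full_sets.
Context d (T : measurableType d) (R : realType) (P : probability T R).

Lemma probability_setC_full (A : set T) :
  measurable A -> P A = 1%E -> P (~` A) = 0%E.
Proof. by move=> mA PA; rewrite probability_setC // PA subee. Qed.

Lemma probability_full_setC (A : set T) :
  measurable A -> P (~` A) = 0%E -> P A = 1%E.
Proof.
move=> mA PCA; rewrite -(probability_setT P) -(setUCr A) measureU //.
- by rewrite [X in (_ + X)%E]PCA adde0.
- exact: measurableC.
- exact: setICr.
Qed.

Lemma probability_disjoint_full (A X : set T) :
  measurable A -> measurable X -> P A = 1%E -> X `&` A = set0 -> P X = 0%E.
Proof.
move=> mA mX PA XA0; apply/eqP; rewrite eq_le measure_ge0 andbT.
rewrite -(probability_setC_full mA PA) le_measure ?inE //; first exact: measurableC.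
by move=> x Xx Ax; rewrite -[False]/(set0 x) -XA0.
Qed.

End probability_full_sets.

Section measure_support.
Context (R : realType) (P : probability R R).

Lemma not_msupp_null_ball (x : R) :
  ~ msupp P x -> exists2 e, 0 < e & P [set` `]x - e, x + e[] = 0%E.
Proof.
move=> /existsNP[e /not_implyP[e0 /negP]]; rewrite -leNgt => Pe.
by exists e => //; apply/eqP; rewrite eq_le Pe measure_ge0.
Qed.

Lemma not_msupp_disjoint (A : set R) (x e : R) :
  measurable A -> P A = 1%E -> 0 < e ->
  [set` `]x - e, x + e[] `&` A = set0 -> ~ msupp P x.
Proof.
move=> mA PA e0 BA /(_ e e0).
by rewrite (probability_disjoint_full mA _ PA BA) ?ltxx //; exact: measurable_itv.
Qed.

(* The null open intervals with rational end points cover the complement of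
   the support, and there are countably many of them. *)
Lemma negligible_compl_msupp : P.-negligible (~` msupp P).
Proof.
pose I (a b : rat) : set R := [set` `]ratr a, ratr b[].
pose F n := if unpickle n is Some (a, b) then if P (I a b) == 0%E then I a b else set0
            else set0.
have nF : P.-negligible (\bigcup_n F n).
  apply: negligible_bigcup => n; rewrite /F.
  case: (unpickle n) => [[a b]|]; last exact: negligible_set0.
  case: eqP => [Pab|_]; last exact: negligible_set0.
  by exists (I a b); split => //; exact: measurable_itv.
apply: negligibleS nF => x /not_msupp_null_ball[e e0 Pe].
have [a] : exists a : rat, ratr a \in `]x - e, x[.
  by apply: rat_in_itvoo; rewrite ltrBlDr ltrDl.
have [b] : exists b : rat, ratr b \in `]x, x + e[.
  by apply: rat_in_itvoo; rewrite ltrDl.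
rewrite !in_itv /= => /andP[xb be] /andP[ea ax].
have Iab0 : P (I a b) = 0%E.
  apply/eqP; rewrite eq_le measure_ge0 andbT -Pe le_measure ?inE //;
    try exact: measurable_itv.
  move=> y /andP[]; rewrite !bnd_simp => ay yb; apply/andP; rewrite !bnd_simp.
  by split; [exact: lt_trans ea ay | exact: lt_trans yb be].
exists (pickle (a, b)); first done.
rewrite /F pickleK Iab0 eqxx.
by apply/andP; rewrite !bnd_simp; split.
Qed.

Lemma msupp_sub1_point_mass (c : R) : msupp P `<=` [set c] -> P [set c] = 1%E.
Proof.
move=> Sc; apply: probability_full_setC => //.
apply: measure_negligible; first exact: measurableC.
exact: negligibleS (subsetC Sc) negligible_compl_msupp.
Qed.

Lemma point_mass_msupp (c : R) : P [set c] = 1%E -> msupp P c.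
Proof.
move=> Pc e e0; apply: (@lt_le_trans _ _ (P [set c])); first by rewrite Pc lte01.
apply: le_measure; rewrite ?inE //; try exact: measurable_itv.
by move=> y /= ->; rewrite in_itv /=; apply/andP; split; lra.
Qed.

Lemma msupp_closed_full (A : set R) : closed A -> P A = 1%E -> msupp P `<=` A.
Proof.
move=> cA PA x Sx; apply: contrapT => nAx.
have /nbhs_ballP[e /= e0 xeA] : nbhs x (~` A).
  by apply: open_nbhs_nbhs; split => //; exact: closed_openC.
apply: not_msupp_disjoint (closed_measurable cA) PA e0 _ Sx.
by apply/disjoints_subset; rewrite -ball_itv.
Qed.

Lemma msupp_isolated_atom (A : set R) (s e : R) :
  measurable A -> P A = 1%E -> msupp P s -> 0 < e ->
  [set` `]s - e, s + e[] `&` A `<=` [set s] -> (0 < P [set s])%E.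
Proof.
move=> mA PA Ss e0 isoA.
apply: (lt_le_trans (Ss e e0)).
have mCA : measurable (~` A) by exact: measurableC.
apply: (@le_trans _ _ (P ([set s] `|` ~` A))).
  apply: le_measure; rewrite ?inE //; first exact: measurableU.
  move=> y ey; have [Ay|nAy] := pselect (A y); last by right.
  by left; apply: isoA.
apply: (le_trans (measureU2 _ _ _)) => //.
by rewrite [X in (_ + X)%E](probability_setC_full mA PA) adde0.
Qed.

End measure_support.

Section integral_full_sets.
Context (R : realType) (P : probability R R).
Local Open Scope ereal_scope.

Lemma integral_point_mass (c : R) (f : R -> \bar R) :
  P [set c] = 1 -> measurable_fun [set: R] f -> \int[P]_x f x = f c.
Proof.
move=> Pc mf; rewrite (eq_measure_integral \d_c); last first.
  move=> A mA _; rewrite [RHS]diracE.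
  have [/set_mem Ac|/negP nAc] := boolP (c \in A).
    apply/eqP; rewrite eq_le probability_le1 //= -Pc.
    by rewrite le_measure ?inE // => y /= ->.
  apply: (probability_disjoint_full _ mA Pc) => //.
  by apply/disjoints_subset => y Ay /= yc; apply: nAc; rewrite -yc; exact/mem_set.
by rewrite integral_dirac // diracT mul1e.
Qed.

Lemma integral_full_set (D : set R) (f : R -> \bar R) :
  measurable D -> P D = 1 -> measurable_fun [set: R] f ->
  \int[P]_x f x = \int[P]_(x in D) f x.
Proof.
move=> mD PD mf; rewrite -(setUCr D) integral_setU //; first last.
- by rewrite /disj_set setICr.
- by rewrite setUCr.
- exact: measurableC.
have mCD : measurable (~` D) by exact: measurableC.
rewrite [X in _ + X]null_set_integral ?adde0 //; first exact: measurable_funS mf.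
exact: probability_setC_full.
Qed.

Lemma integral_two_point_mass (a b : R) (f : R -> \bar R) :
  a != b -> P [set a; b] = 1 -> measurable_fun [set: R] f ->
  \int[P]_x f x = f a * P [set a] + f b * P [set b].
Proof.
move=> ab Pab mf; have mab : measurable [set a; b] by exact: measurableU.
have int1 x : \int[P]_(y in [set x]) f y = f x * P [set x].
  by rewrite (eq_integral (cst (f x))) ?integral_cst // => y /set_mem ->.
rewrite (integral_full_set mab Pab mf) integral_setU //.
- by rewrite !int1.
- exact: measurable_funS mf.
- apply/disj_setPS => x [/= -> ba]; by move: ab; rewrite ba eqxx.
Qed.

End integral_full_sets.

Lemma measurable_sublevel_lt (R : realType) (g : R -> R) (m : R) :
  measurable_fun [set: R] g -> measurable [set x | g x < m].
Proof.
move=> mg; have -> : [set x | g x < m] = g @^-1` [set` `]-oo, m[].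
  by apply/seteqP; split => x /=; rewrite in_itv.
by rewrite -[X in measurable X]setTI; apply: mg => //; exact: measurable_itv.
Qed.

Section bounded_mean.
Context (R : realType) (P : probability R R) (D : set R) (g : R -> R) (K : R).
Hypotheses (mD : measurable D) (PD : P D = 1%E) (mg : measurable_fun [set: R] g)
  (gK : forall x, D x -> `|g x| <= K).
Local Open Scope ereal_scope.

Let integrable_g : P.-integrable D (EFin \o g).
Proof.
apply: measurable_bounded_integrable => //; first by change (P D < +oo); rewrite PD ltry.
  exact: measurable_funS mg.
by exists K; split; [exact: num_real | move=> M KM x Dx; exact: le_trans (gK Dx) (ltW KM)].
Qed.

Lemma bounded_integral_fin_num : \int[P]_x (g x)%:E \is a fin_num.
Proof.
rewrite (integral_full_set mD PD) ?integrable_fin_num //.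
exact/measurable_EFinP.
Qed.

Lemma probability_lt_mean0 (m : R) : \int[P]_x (g x)%:E = m%:E ->
  (forall x, D x -> g x <= m)%R -> P (D `&` [set x | g x < m]%R) = 0.
Proof.
move=> Ig gm.
have I0 : \int[P]_(x in D) `|(m - g x)%:E| = 0.
  rewrite (eq_integral (fun x => (cst m x)%:E - (g x)%:E)); last first.
    by move=> x /set_mem Dx; rewrite abse_EFin ger0_norm ?subr_ge0 ?gm.
  rewrite integralB_EFin //; last exact: finite_measure_integrable_cst.
  have -> : \int[P]_(x in D) (cst m x)%:E = m%:E.
    rewrite (eq_integral (cst m%:E)) // integral_cst //.
    by change (m%:E * P D = m%:E); rewrite PD mule1.
  by rewrite -(integral_full_set mD PD) ?Ig ?subee //; exact/measurable_EFinP.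
have mmg : measurable_fun D (fun x => (m - g x)%:E).
  by apply/measurable_EFinP/measurable_funB => //; exact: measurable_funS mg.
have [N [mN PN0 DN]] := (ae_eq_integral_abs P mD mmg).1 I0.
apply/eqP; rewrite eq_le measure_ge0 andbT -PN0 le_measure ?inE //.
  by apply: measurableI => //; exact: measurable_sublevel_lt.
move=> x [Dx /= gx]; apply: DN => /(_ Dx) [] /eqP; rewrite subr_eq0 => /eqP gxm.
by move: gx; rewrite -gxm ltxx.
Qed.

Lemma atom_eq_mean (m x : R) : \int[P]_x (g x)%:E = m%:E ->
  (forall x, D x -> g x <= m)%R -> D x -> 0 < P [set x] -> g x = m.
Proof.
move=> Ig gm Dx Px; apply/le_anti; rewrite gm //= leNgt; apply/negP => gxm.
suff : P [set x] <= 0 by rewrite leNgt Px.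
rewrite -(probability_lt_mean0 Ig gm) le_measure ?inE //.
- by apply: measurableI => //; exact: measurable_sublevel_lt.
- by move=> y /= ->.
Qed.

End bounded_mean.

Lemma measurable_fun_cst_off_point (R : realType) (f : R -> R) (a : R) :
  (forall x y, x < a -> y < a -> f x = f y) ->
  (forall x y, a < x -> a < y -> f x = f y) -> measurable_fun [set: R] f.
Proof.
move=> fl fr.
have -> : f = fun x => if x < a then f (a - 1) else if a < x then f (a + 1) else f a.
  by apply/funext => x; have [xa|ax|->] := ltgtP x a; [apply: fl | apply: fr |]; lra.
by do 2?apply: measurable_fun_ifT => //; apply: measurable_fun_ltr.
Qed.

Section win_probability.
Context (R : realType) (B v : bool -> R).

Lemma win_prob_above (i : bool) (x y : R) : y < x -> win_prob B v i x y = 1.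
Proof. by move=> yx; rewrite /win_prob yx. Qed.

Lemma win_prob_below (i : bool) (x y : R) : x < y -> win_prob B v i x y = 0.
Proof. by move=> xy; rewrite /win_prob xy ltNge (ltW xy). Qed.

Lemma win_prob_itv (i : bool) (x y : R) : 0 <= win_prob B v i x y <= 1.
Proof.
rewrite /win_prob; repeat case: ifP => _; rewrite ?lexx ?ler01 //.
by rewrite invr_ge0 ler0n invf_le1 ?ler1n // ltr0n.
Qed.

Lemma win_prob_tie_cases (i : bool) (x : R) :
  [\/ win_prob B v i x x = 1 /\ win_prob B v (~~ i) x x = 0,
      win_prob B v i x x = 0 /\ win_prob B v (~~ i) x x = 1 |
      win_prob B v i x x = 2^-1 /\ win_prob B v (~~ i) x x = 2^-1].
Proof.
rewrite /win_prob ltxx negbK.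
case: (x == Lval B v); rewrite /= ?andbF ?andbT /=; last exact: Or33.
have [lt_ji|_] := boolP (Num.min (B (~~ i)) (v (~~ i)) < Num.min (B i) (v i)).
  by apply: Or31; rewrite ltNge (ltW lt_ji).
by case: ifP => _; [exact: Or32 | exact: Or33].
Qed.

Lemma norm_utility_le (i : bool) (x y : R) :
  0 < v i -> 0 <= x <= B i -> `|utility B v i x y| <= v i + B i.
Proof.
move=> vi0 /andP[x0 xB]; have /andP[w0 w1] := win_prob_itv i x y.
have vw0 : 0 <= v i * win_prob B v i x y by rewrite mulr_ge0 // ltW.
have vw1 : v i * win_prob B v i x y <= v i by rewrite ler_piMr // ltW.
by rewrite /utility ler_norml; apply/andP; split; lra.
Qed.

Lemma measurable_utility_opponent (i : bool) (x : R) :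
  measurable_fun [set: R] (fun y => utility B v i x y).
Proof.
rewrite /utility; apply: measurable_funB => //; apply: measurable_funM => //.
by apply: (measurable_fun_cst_off_point (a := x)) => y z yx zx;
  [rewrite !win_prob_above | rewrite !win_prob_below].
Qed.

Lemma measurable_utility_own (i : bool) (y : R) :
  measurable_fun [set: R] (fun x => utility B v i x y).
Proof.
rewrite /utility; apply: measurable_funB => //; apply: measurable_funM => //.
by apply: (measurable_fun_cst_off_point (a := y)) => x z xy zy;
  [rewrite !win_prob_below | rewrite !win_prob_above].
Qed.

Lemma Lval_eq (i : bool) (c : R) :
  B i = c -> c <= B (~~ i) -> c <= v i -> c <= v (~~ i) -> Lval B v = c.
Proof.
rewrite /Lval; case: i => /= <- h1 h2 h3; apply/le_anti/andP; split;
  rewrite ?ge_min ?le_min ?lexx ?h1 ?h2 ?h3 ?orbT //.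
Qed.

End win_probability.

Section expected_utility.
Context (R : realType) (B v : bool -> R).
Local Open Scope ereal_scope.

Lemma is_strategy_dirac (k : bool) (x : R) :
  (0 <= x <= B k)%R -> is_strategy B k \d_x.
Proof.
move=> xB; rewrite /is_strategy; transitivity (((x \in [set` `[0, B k]])%:R)%:E : \bar R).
  exact: diracE.
by rewrite mem_set //= in_itv /= xB.
Qed.

Lemma integral_dirac_EFin (x : R) (f : R -> R) :
  measurable_fun [set: R] f -> \int[\d_x]_y (f y)%:E = (f x)%:E.
Proof. by move=> mf; rewrite integral_dirac ?diracT ?mul1e //; exact/measurable_EFinP. Qed.

Lemma exp_utility_point_mass (k : bool) (nu P : probability R R) (c : R) :
  P [set c] = 1 -> exp_utility B v k nu P = \int[nu]_x (utility B v k x c)%:E.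
Proof.
move=> Pc; rewrite /exp_utility; apply: eq_integral => x _.
apply: integral_point_mass Pc _; apply/measurable_EFinP.
exact: measurable_utility_opponent.
Qed.

Lemma exp_utility_two_point (k : bool) (nu Q : probability R R) (a b p q : R) :
  a != b -> Q [set a; b] = 1 -> Q [set a] = p%:E -> Q [set b] = q%:E ->
  exp_utility B v k nu Q =
  \int[nu]_x (utility B v k x a * p + utility B v k x b * q)%:E.
Proof.
move=> ab Qab Qa Qb; rewrite /exp_utility; apply: eq_integral => x _.
rewrite (integral_two_point_mass ab Qab) ?Qa ?Qb ?EFinD ?EFinM //.
apply/measurable_EFinP; exact: measurable_utility_opponent.
Qed.

End expected_utility.

Section best_response_to_pure_bid.
Context (R : realType) (B v : bool -> R) (i : bool) (P Q : probability R R) (c : R).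
Hypotheses (vi0 : 0 < v i) (Pc : P [set c] = 1%E)
  (QB : is_strategy B i Q)
  (Qbest : forall nu, is_strategy B i nu ->
     (exp_utility B v i nu P <= exp_utility B v i Q P)%E).

Local Notation g x := (utility B v i x c).
Local Notation m := (fine (exp_utility B v i Q P)).

Let mD : measurable [set` `[0, B i]]. Proof. exact: measurable_itv. Qed.

Let mg : measurable_fun [set: R] (fun x => g x).
Proof. exact: measurable_utility_own. Qed.

Let gK x : [set` `[0, B i]] x -> `|g x| <= v i + B i.
Proof. by rewrite /= in_itv /=; exact: norm_utility_le. Qed.

Lemma exp_utility_best_response :
  (\int[Q]_x (g x)%:E = m%:E)%E /\ exp_utility B v i Q P = m%:E.
Proof.
rewrite (exp_utility_point_mass B v i Q Pc) fineK //.
exact: bounded_integral_fin_num mD QB mg gK.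
Qed.

Lemma utility_le_best_response (x : R) : 0 <= x <= B i -> g x <= m.
Proof.
move=> xB; have := Qbest (is_strategy_dirac xB).
rewrite (exp_utility_best_response).2 (exp_utility_point_mass B v i _ Pc).
by rewrite integral_dirac_EFin //; exact: measurable_utility_own.
Qed.

Let utility_le_best_response_itv x : [set` `[0, B i]] x -> g x <= m.
Proof. by rewrite /= in_itv; exact: utility_le_best_response. Qed.

(* Against a bid [c], bidding below [c] only loses money, and bidding above
   [c] wins, so any [x] other than [0] and [c] is beaten by a bid half-way to
   [0] or to [c]. *)
Lemma best_response_bids (x : R) :
  0 <= c -> 0 <= x <= B i -> m <= g x -> x = 0 \/ x = c.
Proof.
move=> c0 /andP[x0 xB] mx.
have below y : y < c -> g y = - y by move=> yc; rewrite /utility win_prob_below ?mulr0 ?sub0r.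
have above y : c < y -> g y = v i - y by move=> cy; rewrite /utility win_prob_above ?mulr1.
have [xc|cx|->] := ltrgtP x c; [left | exfalso | by right].
  apply/eqP; rewrite eq_le x0 andbT leNgt; apply/negP => x_gt0.
  have := utility_le_best_response (x := x / 2) (ltac:(apply/andP; split; lra)).
  rewrite below ?below // in mx *; lra.
have := utility_le_best_response (x := (c + x) / 2) (ltac:(apply/andP; split; lra)).
rewrite above ?above // in mx *; lra.
Qed.

Lemma best_response_two_point : 0 <= c -> Q [set 0; c] = 1%E.
Proof.
move=> c0.
have mA : measurable [set 0; c] by exact: measurableU.
have null_lt := probability_lt_mean0 mD QB mg gK
  (exp_utility_best_response).1 utility_le_best_response_itv.
apply: probability_full_setC => //; apply/eqP.
rewrite eq_le measure_ge0 andbT -(probability_setC_full mD QB).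
rewrite -[leRHS]adde0 -[X in (_ + X)%E]null_lt.
apply: (le_trans _ (measureU2 _ _ _)); first apply: le_measure; rewrite ?inE //.
- exact: measurableC.
- apply: measurableU; first exact: measurableC.
  by apply: measurableI => //; exact: measurable_sublevel_lt.
- move=> x /= nAx; have [xB|xB] := boolP (0 <= x <= B i); last first.
    by left; rewrite /= in_itv /=; exact/negP.
  right; split; first by rewrite /= in_itv.
  rewrite /= ltNge; apply/negP => mx; apply: nAx.
  by case: (best_response_bids c0 xB mx) => ->; [left | right].
- exact: measurableC.
- by apply: measurableI => //; exact: measurable_sublevel_lt.
Qed.

Lemma best_response_atom (x : R) : 0 <= x <= B i -> (0 < Q [set x])%E -> g x = m.
Proof.
move=> xB; apply: (atom_eq_mean mD QB mg gK (exp_utility_best_response).1).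
  exact: utility_le_best_response_itv.
by rewrite /= in_itv.
Qed.

End best_response_to_pure_bid.

Lemma subset2_inf_lt_sup (R : realType) (S : set R) (a b : R) :
  S `<=` [set a; b] -> inf S < sup S -> S = [set a; b] /\ a != b.
Proof.
move=> Sab infS.
have sub1 x : S `<=` [set x] -> False.
  move=> Sx; have [S0|/set0P[y Sy]] := eqVneq S set0.
    by rewrite S0 inf0 sup0 ltxx in infS.
  have Sxx : S = [set x].
    by apply/seteqP; split => // z /= ->; rewrite -(Sx y Sy).
  by rewrite Sxx inf1 sup1 ltxx in infS.
have Sa : S a.
  apply: contrapT => nSa; apply: (sub1 b) => x Sx.
  by case: (Sab x Sx) => // xa; move: Sx; rewrite xa.
have Sb : S b.
  apply: contrapT => nSb; apply: (sub1 a) => x Sx.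
  by case: (Sab x Sx) => // xb; move: Sx; rewrite xb.
split; first by apply/seteqP; split => // x [] ->.
by apply/eqP => ab; apply: (sub1 a) => x /Sab[] // ->; rewrite ab.
Qed.

Lemma msupp_strategy (R : realType) (B : bool -> R) (k : bool) (mk : probability R R) :
  is_strategy B k mk -> msupp mk `<=` [set` `[0, B k]].
Proof. by apply: msupp_closed_full; exact: interval_closed. Qed.

Section pure_against_mixed.
Context (R : realType) (B v : bool -> R) (mu : bool -> probability R R) (i : bool).
Hypotheses (hB : forall k, 0 <= B k) (hv : forall k, 0 < v k)
  (Hnash : nash_eq B v mu)
  (Hpure : inf (msupp (mu (~~ i))) = sup (msupp (mu (~~ i))))
  (Hmixed : inf (msupp (mu i)) < sup (msupp (mu i))).

Local Notation c := (inf (msupp (mu (~~ i)))).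
Local Notation P := (mu (~~ i)).
Local Notation Q := (mu i).
Local Notation p := (fine (Q [set 0])).
Local Notation q := (fine (Q [set c])).

Lemma pure_point_mass : P [set c] = 1%E.
Proof.
have Ssub := msupp_strategy (Hnash.1 (~~ i)).
apply: msupp_sub1_point_mass => x Sx /=; apply/le_anti/andP; split.
  rewrite Hpure; apply: sup_upper_bound => //; split; first by exists x.
  by exists (B (~~ i)) => y /Ssub /=; rewrite in_itv => /andP[].
by apply: ge_inf => //; exists 0 => y /Ssub /=; rewrite in_itv => /andP[].
Qed.

Lemma pure_bid_itv : 0 <= c <= B (~~ i).
Proof.
by have := msupp_strategy (Hnash.1 (~~ i)) (point_mass_msupp pure_point_mass);
  rewrite /= in_itv.
Qed.

Let c_ge0 : 0 <= c. Proof. by case/andP: pure_bid_itv. Qed.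

Lemma mixed_two_point : Q [set 0; c] = 1%E.
Proof. exact: best_response_two_point (hv i) pure_point_mass (Hnash.1 i) (Hnash.2 i) c_ge0. Qed.

Lemma msupp_mixed : msupp Q = [set 0; c] /\ 0 < c.
Proof.
have closed_0c : closed [set 0; c].
  by apply: closedU; exact/accessible_closed_set1/hausdorff_accessible/Rhausdorff.
have [-> c0] := subset2_inf_lt_sup (msupp_closed_full closed_0c mixed_two_point) Hmixed.
by split => //; rewrite lt_neqAle c0 c_ge0.
Qed.

Let c_gt0 : 0 < c. Proof. exact: msupp_mixed.2. Qed.

Lemma mixed_atoms : (0 < Q [set 0%R])%E /\ (0 < Q [set c])%E.
Proof.
have mA : measurable [set 0; c] by exact: measurableU.
have Ssupp := msupp_mixed.1.
split; apply: (msupp_isolated_atom mA mixed_two_point _ c_gt0).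
- by rewrite Ssupp; left.
- move=> y [] /=; rewrite in_itv /= => /andP[yl yr] [//|yc].
  by move: yl; rewrite yc; lra.
- by rewrite Ssupp; right.
- move=> y [] /=; rewrite in_itv /= => /andP[yl yr] [y0|//].
  by move: yr; rewrite y0; lra.
Qed.

Lemma mixed_masses :
  [/\ Q [set 0] = p%:E, Q [set c] = q%:E, 0 < p, 0 < q & p + q = 1].
Proof.
have [Q0 Qc] := mixed_atoms.
have Q0E : Q [set 0] = p%:E by rewrite fineK // fin_num_measure.
have QcE : Q [set c] = q%:E by rewrite fineK // fin_num_measure.
split => //; [by rewrite -lte_fin -Q0E | by rewrite -lte_fin -QcE |].
have c0 : 0 != c by rewrite lt_eqF.
have := mixed_two_point; rewrite measureU //.
  by move=> /(congr1 fine); rewrite fineD ?fin_num_measure.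
by apply/seteqP; split => // x [/= -> c0E]; move: c0; rewrite c0E eqxx.
Qed.

Let mixed_bid_le : c <= B i.
Proof.
have := msupp_strategy (Hnash.1 i); rewrite msupp_mixed.1.
by move=> /(_ c (or_intror erefl)); rewrite /= in_itv => /andP[].
Qed.

Let atom_i := best_response_atom (hv i) pure_point_mass (Hnash.1 i) (Hnash.2 i).

Lemma mixed_value0 :
  fine (exp_utility B v i Q P) = 0 /\ exp_utility B v i Q P = 0%E.
Proof.
have m0 : fine (exp_utility B v i Q P) = 0.
  rewrite -(atom_i (x := 0)) ?lexx ?hB ?mixed_atoms.1 //.
  by rewrite /utility win_prob_below // mulr0 subr0.
split => //.
by rewrite (exp_utility_best_response (hv i) pure_point_mass (Hnash.1 i)).2 m0.
Qed.

Lemma mixed_tie_value : v i * win_prob B v i c c = c.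
Proof.
apply/eqP; rewrite -subr_eq0; apply/eqP; rewrite -mixed_value0.1.
by apply: atom_i; [rewrite c_ge0 mixed_bid_le | exact: mixed_atoms.2].
Qed.

Lemma mixed_bid_ge_budget_or_value : Num.min (B i) (v i) <= c.
Proof.
rewrite leNgt; apply/negP => cBv.
have hmin : Num.min (B i) (v i) <= B i /\ Num.min (B i) (v i) <= v i.
  by split; rewrite ge_min lexx ?orbT.
have c0 := c_ge0; set y := (c + Num.min (B i) (v i)) / 2.
have yc : c < y by rewrite /y; lra.
have := utility_le_best_response (hv i) pure_point_mass (Hnash.1 i) (Hnash.2 i) (x := y).
rewrite mixed_value0.1 /utility win_prob_above // mulr1.
by move/(_ (ltac:(apply/andP; split; rewrite /y; lra))); rewrite /y; lra.
Qed.

Let pure_best nu : is_strategy B (~~ i) nu ->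
  (exp_utility B v (~~ i) nu Q <= exp_utility B v (~~ i) P Q)%E.
Proof. by have := Hnash.2 (~~ i) nu; rewrite negbK. Qed.

Local Notation u y := (utility B v (~~ i) y 0 * p + utility B v (~~ i) y c * q).

Lemma exp_utility_against_mixed (nu : probability R R) :
  exp_utility B v (~~ i) nu Q = (\int[nu]_y (u y)%:E)%E.
Proof.
have [Q0 Qc _ _ _] := mixed_masses.
by apply: exp_utility_two_point => //; [rewrite lt_eqF | exact: mixed_two_point].
Qed.

Let measurable_u : measurable_fun [set: R] (fun y => u y).
Proof.
by apply: measurable_funD; apply: measurable_funM => //; exact: measurable_utility_own.
Qed.

Lemma pure_exp_utility : exp_utility B v (~~ i) P Q = (u c)%:E.
Proof.
rewrite exp_utility_against_mixed (integral_point_mass pure_point_mass) //.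
exact/measurable_EFinP.
Qed.

Lemma pure_deviation_le y : 0 <= y <= B (~~ i) -> u y <= u c.
Proof.
move=> yB; have := pure_best (is_strategy_dirac yB).
by rewrite pure_exp_utility exp_utility_against_mixed integral_dirac_EFin.
Qed.

(* Bidding [y] just below [c] saves [c - y] and still beats the atom at [0];
   it only gives up the tie against the atom at [c]. *)
Lemma pure_tie_bound : c <= q * (v (~~ i) * win_prob B v (~~ i) c c).
Proof.
have [_ _ p0 q0 pq] := mixed_masses; have c0 := c_gt0; have /andP[_ cB] := pure_bid_itv.
have vj := hv (~~ i); have /andP[k0 _] := win_prob_itv B v (~~ i) c c.
set X := q * (v (~~ i) * win_prob B v (~~ i) c c).
have X0 : 0 <= X by rewrite mulr_ge0 ?mulr_ge0 // ltW.
rewrite leNgt; apply/negP => Xc; set y := (c - X) / 2.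
have y0 : 0 < y by rewrite /y; lra.
have yc : y < c by rewrite /y; lra.
have := pure_deviation_le (y := y) (ltac:(apply/andP; split; lra)).
rewrite /utility [win_prob _ _ _ y 0]win_prob_above // [win_prob _ _ _ c 0]win_prob_above //.
rewrite [win_prob _ _ _ y c]win_prob_below // -/X.
have -> : p = 1 - q by lra.
rewrite -subr_le0 (_ : _ - _ = c - y - X); first by rewrite /y; lra.
by rewrite /X; ring.
Qed.

Lemma tie_split_evenly :
  win_prob B v i c c = 2^-1 /\ win_prob B v (~~ i) c c = 2^-1.
Proof.
have := pure_tie_bound; have := mixed_tie_value; have c0 := c_gt0.
by case: (win_prob_tie_cases B v i c) => [[_ ->]|[-> _]|//]; rewrite !mulr0; lra.
Qed.

Lemma pure_bid_bound : c <= q * v (~~ i) / 2.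
Proof. by have := pure_tie_bound; rewrite tie_split_evenly.2 mulrA. Qed.

Lemma Lval_pure_bid : Lval B v = c.
Proof.
have := mixed_tie_value; rewrite tie_split_evenly.1 => cvi.
have cq := pure_bid_bound; have [_ _ p0 q0 pq] := mixed_masses.
have c0 := c_gt0; have vi := hv i; have vj := hv (~~ i).
have /andP[_ cBj] := pure_bid_itv; have cBi := mixed_bid_le.
have qv : q * v (~~ i) <= v (~~ i) by rewrite ler_piMl //; lra.
have Bic : B i = c.
  apply/le_anti; rewrite cBi andbT.
  by have := mixed_bid_ge_budget_or_value; rewrite ge_min => /orP[//|vc]; lra.
by apply: Lval_eq => //; lra.
Qed.

Lemma mixed_cdf0_le : (bid_cdf Q 0 <= p%:E)%E.
Proof.
have [Q0 _ _ _ _] := mixed_masses; have c0 := c_gt0.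
have mA : measurable [set 0; c] by exact: measurableU.
have mCA : measurable (~` [set 0; c]) by exact: measurableC.
rewrite -Q0 /bid_cdf; apply: (@le_trans _ _ (Q ([set 0] `|` ~` [set 0; c]))).
  apply: le_measure; rewrite ?inE //; first exact: measurableU.
  move=> y /=; rewrite in_itv /= => y0; have [->|y_neq0] := eqVneq y 0; first by left.
  by right => -[/eqP|yc]; [rewrite (negbTE y_neq0) | move: y0; rewrite yc; lra].
apply: (le_trans (measureU2 _ _ _)) => //.
by rewrite [X in (_ + X)%E](probability_setC_full mA mixed_two_point) adde0.
Qed.

Lemma mixed_cdf0_bound : (bid_cdf Q 0 <= (1 - 2 * c / v (~~ i))%:E)%E.
Proof.
apply: le_trans mixed_cdf0_le _; rewrite lee_fin.
have [_ _ _ _ pq] := mixed_masses; have cq := pure_bid_bound; have vj := hv (~~ i).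
have : 2 * c / v (~~ i) <= q by rewrite ler_pdivrMr //; lra.
lra.
Qed.

Lemma pure_exp_utility_bound :
  (exp_utility B v (~~ i) P Q <= (v (~~ i) - 2 * c)%:E)%E.
Proof.
have [_ _ _ _ pq] := mixed_masses; have cq := pure_bid_bound; have c0 := c_gt0.
rewrite pure_exp_utility lee_fin /utility win_prob_above // tie_split_evenly.2.
have -> : p = 1 - q by lra.
suff -> : (v (~~ i) * 1 - c) * (1 - q) + (v (~~ i) / 2 - c) * q =
          v (~~ i) - q * v (~~ i) / 2 - c :> R by lra.
by field.
Qed.

End pure_against_mixed.

Theorem lemma3 (R : realType) (B v : bool -> R)
  (hB : forall j, 0 <= B j) (hv : forall j, 0 < v j)
  (mu : bool -> probability R R) (i : bool) :
  nash_eq B v mu ->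
  inf (msupp (mu i)) < sup (msupp (mu i)) ->
  inf (msupp (mu (~~ i))) = sup (msupp (mu (~~ i))) ->
  [/\ msupp (mu i) = [set 0; Lval B v],
      (bid_cdf (mu i) 0 <= (1 - 2 * Lval B v / v (~~ i))%:E)%E,
      exp_utility B v i (mu i) (mu (~~ i)) = 0%E
    & (exp_utility B v (~~ i) (mu (~~ i)) (mu i) <= (v (~~ i) - 2 * Lval B v)%:E)%E].
Proof.
move=> Hnash Hmixed Hpure; rewrite (Lval_pure_bid hB hv Hnash Hpure Hmixed); split.
- exact: (msupp_mixed hv Hnash Hpure Hmixed).1.
- exact: mixed_cdf0_bound hB hv Hnash Hpure Hmixed.
- exact: (mixed_value0 hB hv Hnash Hpure Hmixed).2.
- exact: pure_exp_utility_bound hB hv Hnash Hpure Hmixed.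
Qed.
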